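(* Fix an integer $n\ge 1$. For every classical strategy $h$, the expected score satisfies $V(\mathcal{F}_{\mathrm{BV}},h)\le \frac{1}{2^n-1}$, and this value is attained; hence $V(\mathcal{F}_{\mathrm{BV}},C)=\max_{h\in C}V(\mathcal{F}_{\mathrm{BV}},h)=\frac{1}{2^n-1}$. Moreover $V(\mathcal{F}_{\mathrm{BV}},Q)=\sup_{h\in Q}V(\mathcal{F}_{\mathrm{BV}},h)=1$, so that \[ \frac{V(\mathcal{F}_{\mathrm{BV}},Q)}{V(\mathcal{F}_{\mathrm{BV}},C)}=2^n-1 . \]
   Context: Let $\omega=\{0,1\}^n$. For $u\in\omega\setminus\{0^n\}$ and $b\in\{0,1\}$ let $S_{u,b}=\{x\in\omega : u\cdot x\equiv b \pmod 2\}$ (so $|S_{u,b}|=2^{n-1}$), and let $\mathcal{F}_{\mathrm{BV}}=\{S_{u,b}\}$, a family of $2(2^n-1)$ subsets. For a nonempty $S\subset\omega$, the subset state is $|S\rangle=|S|^{-1/2}\sum_{x\in S}|x\rangle$ on $n$ qubits. In the complement sampling game, a set $S$ is drawn uniformly at random from $\mathcal{F}_{\mathrm{BV}}$, the player receives one copy of $|S\rangle$ and outputs $y\in\omega$; the strategy is described by the conditional distribution $h(y\mid S)$. The score is $\sigma(S,y)=+1$ if $y\in\bar S=\omega\setminus S$ and $\sigma(S,y)=-1$ otherwise, and the expected score is $V(\mathcal{F}_{\mathrm{BV}},h)=\mathbb{E}_{S\sim\mathrm{Unif}(\mathcal{F}_{\mathrm{BV}})}\mathbb{E}_{y\sim h(\cdot\mid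 S)}[\sigma(S,y)]$. A quantum strategy (set $Q$) may apply any quantum operation to $|S\rangle$ (with ancillas) followed by any measurement yielding $y$. A classical strategy (set $C$) first measures $|S\rangle$ in the computational basis, obtaining $x$ uniformly distributed on $S$, and then outputs $y$ according to an arbitrary (possibly randomized) rule $h(y\mid x)$ depending only on $x$, so that $h(y\mid S)=\sum_{x}h(y\mid x)\,|\langle x|S\rangle|^2$. *)

From HB Require Import structures.
From mathcomp Require Import all_boot all_order all_algebra.
From mathcomp Require Import complex.
Set Implicit Arguments. Unset Strict Implicit. Unset Printing Implicit Defensive.
Import Order.TTheory GRing.Theory Num.Theory.
Local Open Scope ring_scope.

Definition omega (n : nat) := {ffun 'I_n -> bool}.
Definition zerovec (n : nat) : omega n := [ffun => false].

Definition dotp (n : nat) (u x : omega n) : bool :=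
  odd (\sum_(i < n) ((u i && x i) : nat))%N.

Definition Sub (n : nat) (u : omega n) (b : bool) : {set omega n} :=
  [set x | dotp u x == b].

Definition FBV (n : nat) : {set {set omega n}} :=
  [set Sub ub.1 ub.2 | ub : omega n * bool & ub.1 != zerovec n].

Definition score (R : numDomainType) (n : nat) (S : {set omega n}) (y : omega n) : R :=
  if y \in S then -1 else 1.

(* expected score of a strategy given by the conditional law h(y|S) *)
Definition Vscore (R : numFieldType) (n : nat) (F : {set {set omega n}})
  (h : {set omega n} -> omega n -> R) : R :=
  (#|F|%:R)^-1 * \sum_(S in F) \sum_(y : omega n) h S y * score R S y.

(* amplitude <x|S> of the subset state |S> (real) *)
Definition amp (R : rcfType) (n : nat) (S : {set omega n}) (x : omega n) : R :=
  if x \in S then (Num.sqrt (#|S|%:R))^-1 else 0.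

Definition ket (R : rcfType) (n : nat) (S : {set omega n}) (x : omega n) : R[i] :=
  Complex (amp R S x) 0.

(* classical strategies: stochastic rule h(y|x) applied to the outcome of a
   computational-basis measurement *)
Definition classical_rule (R : rcfType) (n : nat) (h : omega n -> omega n -> R) : Prop :=
  (forall x y, 0 <= h x y) /\ (forall x, \sum_(y : omega n) h x y = 1).

Definition classical_cond (R : rcfType) (n : nat) (h : omega n -> omega n -> R)
  (S : {set omega n}) (y : omega n) : R :=
  \sum_(x : omega n) h x y * (amp R S x) ^+ 2.

(* quantum strategies: a POVM {E_y} on the n-qubit space C^omega
   (E y x x' = <x|E_y|x'>) *)
Definition povm (R : rcfType) (n : nat) (E : omega n -> omega n -> omega n -> R[i]) : Prop :=
  (forall y x x', E y x' x = (E y x x')^*) /\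
  (forall y (v : omega n -> R[i]),
      0 <= \sum_(x : omega n) \sum_(x' : omega n) (v x)^* * E y x x' * v x') /\
  (forall x x', \sum_(y : omega n) E y x x' = (x == x')%:R).

(* h(y|S) = <S|E_y|S> (real part; it is real for a POVM) *)
Definition quantum_cond (R : rcfType) (n : nat) (E : omega n -> omega n -> omega n -> R[i])
  (S : {set omega n}) (y : omega n) : R :=
  complex.Re (\sum_(x : omega n) \sum_(x' : omega n)
                 (ket R S x)^* * E y x x' * ket R S x').

From Pilot Require Import Defs.
From HB Require Import structures.
From mathcomp Require Import all_boot all_order all_algebra.
From mathcomp Require Import complex ring lra.
Import Order.TTheory GRing.Theory Num.Theory.
Set Implicit Arguments. Unset Strict Implicit.
Local Open Scope ring_scope.

(* Measuring |S> in the computational basis gives a uniform x in S.  A pair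
   (x, y) lies in a common S_{u,b} for 2^(n-1) - 1 + [x = y] 2^(n-1) of the
   2(2^n - 1) sets, so the classical value is (1 - sum_x h(x|x)) / (2^n - 1):
   echoing x is the only way to lose, and any fixed-point-free rule is optimal.
   Quantumly, w_y := 2^(1-n) 1 - e_y satisfies sum_y w_y w_y^T = Id (because
   2^n = 2 2^(n-1)), and w_y is orthogonal to |S> whenever y is in S and
   |S| = 2^(n-1); so the rank-one POVM (w_y w_y^T)_y never outputs an element
   of S and scores 1. *)

Section BooleanVectors.

Variable n : nat.
Implicit Types u x y z : omega n.

Definition xorv x y : omega n := [ffun i => x i (+) y i].
Definition basisv (i : 'I_n) : omega n := [ffun j => j == i].

Lemma dotpE u x : dotp u x = \big[addb/false]_i (u i && x i).
Proof.
rewrite /dotp (big_morph odd oddD (erefl (odd 0))).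
by apply: eq_bigr => i _; rewrite oddb.
Qed.

Lemma dotpC u x : dotp u x = dotp x u.
Proof. by rewrite !dotpE; apply: eq_bigr => i _; rewrite andbC. Qed.

Lemma dotp_xorv u x y : dotp u (xorv x y) = dotp u x (+) dotp u y.
Proof.
rewrite !dotpE -big_split /=; apply: eq_bigr => i _; rewrite ffunE.
by case: (u i); case: (x i); case: (y i).
Qed.

Lemma dotp_basisv u i : dotp u (basisv i) = u i.
Proof.
rewrite dotpE (bigD1 i) //= ffunE eqxx andbT big1 ?addbF // => j /negPf ji.
by rewrite ffunE ji andbF.
Qed.

Lemma dotp0l x : dotp (zerovec n) x = false.
Proof. by rewrite dotpE big1 // => i _; rewrite ffunE. Qed.

Lemma xorvv x : xorv x x = zerovec n.
Proof. by apply/ffunP => i; rewrite !ffunE addbb. Qed.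

Lemma xorv_eq0 x y : (xorv x y == zerovec n) = (x == y).
Proof.
apply/eqP/eqP => [/ffunP E | ->]; last exact: xorvv.
by apply/ffunP => i; move: (E i); rewrite !ffunE; case: (x i); case: (y i).
Qed.

Lemma card_omega : #|omega n| = (2 ^ n)%N.
Proof. by rewrite card_ffun card_bool card_ord. Qed.

(* Flipping a coordinate [i] with [z i] set swaps the two sides of [z.u = b]. *)
Lemma card_dotp_eq z b : z != zerovec n ->
  (#|[set u | dotp z u == b]|).*2 = (2 ^ n)%N.
Proof.
move=> nz_z; have [i zi] : exists i, z i.
  apply/existsP; apply: contraR nz_z => /existsPn z0.
  by apply/eqP/ffunP => i; rewrite ffunE; apply/negbTE.
pose flip u := xorv u (basisv i).
have flipK : involutive flip by move=> u; apply/ffunP => j; rewrite !ffunE addbK.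
have flip_pre : flip @^-1: [set u | dotp z u == b] = ~: [set u | dotp z u == b].
  by apply/setP => u; rewrite !inE dotp_xorv dotp_basisv zi; case: (dotp z u); case: b.
rewrite -card_omega -(cardsC [set u | dotp z u == b]) -flip_pre.
by rewrite card_preimset ?addnn //; apply: inv_inj.
Qed.

End BooleanVectors.

(* Dimension [n.+1], so that every [S_{u,b}] has [2 ^ n] elements. *)
Section BVFamily.

Variable n : nat.
Implicit Types u x y : omega n.+1.

Lemma card_Sub u b : u != zerovec n.+1 -> #|Defs.Sub u b| = (2 ^ n)%N.
Proof.
move=> nz_u; apply/eqP; rewrite -(eqn_pmul2l (isT : (0 < 2)%N)) mul2n -expnS.
rewrite -(card_dotp_eq b nz_u); apply/eqP/congr1/eq_card => x.
by rewrite !inE dotpC.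
Qed.

Lemma card_dotp_eq_dotp x y :
  #|[set u : omega n.+1 | dotp u x == dotp u y]| = (2 ^ n * (1 + (x == y)))%N.
Proof.
have -> : [set u | dotp u x == dotp u y] = [set u | dotp (xorv x y) u == false].
  apply/setP => u; rewrite !inE (dotpC (xorv x y)) dotp_xorv.
  by case: (dotp u x); case: (dotp u y).
have [<-|nxy] := eqVneq x y.
  rewrite -expnSr -card_omega -cardsT; apply: eq_card => u.
  by rewrite !inE xorvv dotp0l.
apply/eqP; rewrite addn0 muln1 -(eqn_pmul2l (isT : (0 < 2)%N)) mul2n -expnS.
by rewrite card_dotp_eq // xorv_eq0.
Qed.

Lemma Sub_inj : injective (fun ub : omega n.+1 * bool => Defs.Sub ub.1 ub.2).
Proof.
move=> [u b] [u' b'] /= /setP E.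
have eq_b : b = b'.
  move: (E (zerovec _)); rewrite !inE !(dotpC _ (zerovec _)) !dotp0l.
  by case: (b); case: (b').
subst b'; congr pair; apply/ffunP => i.
move: (E (basisv i)); rewrite !inE !dotp_basisv.
by case: (u i); case: (u' i); case: (b).
Qed.

Lemma big_FBV (V : nmodType) (G : {set omega n.+1} -> V) :
  \sum_(S in FBV n.+1) G S = \sum_(u | u != zerovec n.+1) \sum_b G (Defs.Sub u b).
Proof.
rewrite big_imset; last by move=> ? ? _ _; apply: Sub_inj.
by rewrite pair_big /=; apply: eq_bigl => -[u b]; rewrite !inE andbT.
Qed.

Lemma card_FBV : #|FBV n.+1| = ((2 ^ n.+1 - 1) * 2)%N.
Proof.
rewrite -sum1_card big_FBV /=.
under eq_bigr do rewrite sum1_card card_bool.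
rewrite sum_nat_const -card_omega subn1 -(cardC1 (zerovec _)); congr (_ * _)%N.
Qed.

Lemma card_FBV_mem S : S \in FBV n.+1 -> #|S| = (2 ^ n)%N.
Proof. by case/imsetP => -[u b]; rewrite inE /= => nz_u ->; apply: card_Sub. Qed.

Lemma FBV_neq0 S : S \in FBV n.+1 -> S != set0.
Proof. by move/card_FBV_mem => cardS; rewrite -card_gt0 cardS expn_gt0. Qed.

Lemma sum_FBV_mem2 x y :
  (\sum_(S in FBV n.+1) ((x \in S) && (y \in S)) = (2 ^ n * (1 + (x == y))).-1)%N.
Proof.
rewrite big_FBV -card_dotp_eq_dotp -sum1_card [in RHS](bigD1 (zerovec _)) ?inE ?dotp0l //=.
rewrite add0n big_andbC big_mkcondr /=; apply: eq_bigr => u _.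
rewrite big_bool !inE.
by case: (dotp u x); case: (dotp u y).
Qed.

End BVFamily.

Lemma sum_indicator (R : pzSemiRingType) (T : finType) (A : {set T}) :
  \sum_x ((x \in A)%:R : R) = #|A|%:R.
Proof.
by rewrite -sum1_card natr_sum [RHS]big_mkcond; apply: eq_bigr => x _; case: (x \in A).
Qed.

Lemma sum_delta_mull (R : pzSemiRingType) (T : finType) (F : T -> R) (x : T) :
  \sum_y (x == y)%:R * F y = F x.
Proof.
rewrite (bigD1 x) //= eqxx mul1r big1 ?addr0 // => y /negPf.
by rewrite eq_sym => ->; rewrite mul0r.
Qed.

Section Scores.

Variables (R : rcfType) (n : nat).
Implicit Types (S : {set omega n}) (x y : omega n).

Lemma amp_sqr S x : amp R S x ^+ 2 = (x \in S)%:R / #|S|%:R.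
Proof.
rewrite /amp; case: (x \in S); last by rewrite expr0n mul0r.
by rewrite exprVn sqr_sqrtr ?ler0n // mul1r.
Qed.

Lemma sum_amp_sqr S : S != set0 -> \sum_x amp R S x ^+ 2 = 1.
Proof.
move=> S0; under eq_bigr do rewrite amp_sqr.
by rewrite -mulr_suml sum_indicator divff // pnatr_eq0 cards_eq0.
Qed.

Lemma sum_amp_sqr_le1 S : \sum_x amp R S x ^+ 2 <= 1.
Proof.
have [->|/sum_amp_sqr-> //] := eqVneq S set0.
by rewrite big1 // => x _; rewrite /amp inE expr0n.
Qed.

Lemma sum_mul_score (q : omega n -> R) S :
  \sum_y q y * score R S y = \sum_y q y - 2 * \sum_(y in S) q y.
Proof.
rewrite [X in _ * X]big_mkcond mulr_sumr -sumrB; apply: eq_bigr => y _.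
by rewrite /score; case: (y \in S); ring.
Qed.

Lemma Vscore_le1 (F : {set {set omega n}}) (h : {set omega n} -> omega n -> R) :
  (forall S, S \in F -> \sum_y h S y * score R S y <= 1) -> Vscore F h <= 1.
Proof.
move=> le1; rewrite /Vscore.
have [->|F_gt0] := posnP #|F|; first by rewrite invr0 mul0r ler01.
rewrite ler_pdivrMl ?ltr0n // mulr1 -sum1_card natr_sum.
exact: ler_sum.
Qed.

End Scores.

Section Classical.

Variables (R : rcfType) (n : nat).
Implicit Types (h : omega n -> omega n -> R) (S : {set omega n}) (x y : omega n).

Definition det_rule (f : omega n -> omega n) x y : R := (y == f x)%:R.

Lemma classical_rule_det f : classical_rule (det_rule f).
Proof.
split=> [x y|x]; first by rewrite ler0n.
by rewrite /det_rule (bigD1 (f x)) //= eqxx big1 ?addr0 // => y /negPf ->.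
Qed.

Lemma sum_classical_cond h S : classical_rule h -> S != set0 ->
  \sum_y classical_cond h S y = 1.
Proof.
move=> [_ h1] S0; rewrite /classical_cond exchange_big /=.
under eq_bigr do rewrite -mulr_suml h1 mul1r.
exact: sum_amp_sqr.
Qed.

Lemma sum_in_classical_cond h S :
  \sum_(y in S) classical_cond h S y
  = #|S|%:R^-1 * \sum_x \sum_y h x y * ((x \in S) && (y \in S))%:R.
Proof.
rewrite /classical_cond exchange_big mulr_sumr /=; apply: eq_bigr => x _.
rewrite mulr_sumr big_mkcond /=; apply: eq_bigr => y _.
by rewrite amp_sqr; case: (x \in S); case: (y \in S) => /=; ring.
Qed.

End Classical.

Section ClassicalBV.

Variables (R : rcfType) (n : nat).
Implicit Types (h : omega n.+1 -> omega n.+1 -> R) (x y : omega n.+1).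

Lemma sum_FBV_in_classical_cond h : classical_rule h ->
  \sum_(S in FBV n.+1) \sum_(y in S) classical_cond h S y
  = 2 * ((2 ^ n)%:R - 1) + \sum_x h x x.
Proof.
move=> [_ h1]; set K : R := (2 ^ n)%:R.
have K0 : K != 0 by rewrite pnatr_eq0 expn_eq0.
have pair_count x y :
    \sum_(S in FBV n.+1) ((x \in S) && (y \in S))%:R = K - 1 + K * (x == y)%:R.
  rewrite -natr_sum sum_FBV_mem2 -subn1 natrB ?muln_gt0 ?expn_gt0 //.
  by rewrite (natrM R) natrD -/K; case: (x == y) => /=; ring.
have row_sum x : \sum_y h x y * (K - 1 + K * (x == y)%:R) = K - 1 + K * h x x.
  under eq_bigr do rewrite mulrDr.
  rewrite big_split /= -mulr_suml h1 mul1r (bigD1 x) //= eqxx big1 ?addr0.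
    by rewrite mulr1 mulrC.
  by move=> y /negPf; rewrite eq_sym => ->; rewrite mulr0 mulr0.
under eq_bigr => S /card_FBV_mem cardS do rewrite sum_in_classical_cond cardS.
rewrite -mulr_sumr exchange_big /=.
under eq_bigr => x _ do rewrite exchange_big /=.
under eq_bigr => x _ do under eq_bigr => y _ do rewrite -mulr_sumr pair_count.
under eq_bigr do rewrite row_sum.
rewrite big_split /= sumr_const card_omega -mulr_sumr -/K.
by rewrite -[_ *+ 2 ^ n.+1]mulr_natr expnS (natrM R) -/K; field.
Qed.

Lemma Vscore_classical h : classical_rule h ->
  Vscore (FBV n.+1) (classical_cond h) = (1 - \sum_x h x x) / (2 ^ n.+1 - 1)%N%:R.
Proof.
move=> hr; rewrite /Vscore; set K : R := (2 ^ n)%:R.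
have K1 : 1 <= K by rewrite ler1n expn_gt0.
have -> : ((2 ^ n.+1 - 1)%N%:R : R) = 2 * K - 1.
  by rewrite natrB ?expn_gt0 // expnS natrM.
under eq_bigr => S /FBV_neq0 S0 do rewrite sum_mul_score sum_classical_cond //.
rewrite sumrB -mulr_sumr sum_FBV_in_classical_cond // sumr_const card_FBV.
rewrite -mulr_natr natrM natrB ?expn_gt0 // expnS natrM -/K.
by field; rewrite lt0r_neq0 //; lra.
Qed.

End ClassicalBV.

Section Quantum.

(* [%:C] is only in complex_scope, whereas [^*] must stay the ring-scope
   [Num.conj] used in Defs. *)
Local Open Scope complex_scope.
Local Open Scope ring_scope.

Variables (R : rcfType) (n : nat).
Implicit Types (E : omega n -> omega n -> omega n -> R[i]) (S : {set omega n}).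
Implicit Types x y : omega n.

Lemma conj_real_complex (a : R) : (a%:C)^* = a%:C :> R[i].
Proof. exact: conjc_real. Qed.

Lemma Re_sum (I : finType) (F : I -> R[i]) :
  complex.Re (\sum_i F i) = \sum_i complex.Re (F i).
Proof. exact: (raddf_sum (@complex.Re R : Rcomplex R -> R)). Qed.

Lemma quantum_cond_ge0 E S y : povm E -> 0 <= quantum_cond E S y.
Proof. by case=> _ [psd _]; move: (psd y (ket R S)); rewrite lecE => /andP[]. Qed.

Lemma sum_quantum_cond E S : povm E ->
  \sum_y quantum_cond E S y = \sum_x amp R S x ^+ 2.
Proof.
case=> _ [_ resolution]; rewrite /quantum_cond -Re_sum exchange_big /=.
under eq_bigr => x _ do rewrite exchange_big /=.
under eq_bigr => x _ do under eq_bigr => x' _ do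
  rewrite -mulr_suml -mulr_sumr resolution.
rewrite Re_sum; apply: eq_bigr => x _.
rewrite (bigD1 x) //= eqxx mulr1 big1 ?addr0 => [|x' /negPf]; last first.
  by rewrite eq_sym => ->; rewrite mulr0 mul0r.
by rewrite /ket complexr0 conj_real_complex -rmorphM.
Qed.

Lemma Vscore_quantum_le1 (F : {set {set omega n}}) E : povm E ->
  Vscore F (quantum_cond E) <= 1.
Proof.
move=> povmE; apply: Vscore_le1 => S _.
rewrite sum_mul_score sum_quantum_cond //.
have q_in_ge0 : 0 <= \sum_(y in S) quantum_cond E S y.
  by apply: sumr_ge0 => y _; apply: quantum_cond_ge0.
by have := sum_amp_sqr_le1 R S; lra.
Qed.

Definition rank1_povm (w : omega n -> omega n -> R) y x x' : R[i] :=
  (w y x * w y x')%:C.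

Lemma povm_rank1 w : (forall x x', \sum_y w y x * w y x' = (x == x')%:R) ->
  povm (rank1_povm w).
Proof.
move=> orth; split; [|split].
- by move=> y x x'; rewrite /rank1_povm conj_real_complex mulrC.
- move=> y v; set s := \sum_x (w y x)%:C * v x.
  have -> : \sum_x \sum_x' (v x)^* * rank1_povm w y x x' * v x' = s^* * s.
    rewrite /s rmorph_sum big_distrl /=; apply: eq_bigr => x _.
    rewrite big_distrr /=; apply: eq_bigr => x' _.
    by rewrite rmorphM /= conj_real_complex /rank1_povm rmorphM; ring.
  by rewrite mulrC mul_conjC_ge0.
- by move=> x x'; rewrite /rank1_povm -rmorph_sum orth; case: (x == x').
Qed.

Lemma quantum_cond_rank1 w S y :
  quantum_cond (rank1_povm w) S y = (\sum_x amp R S x * w y x) ^+ 2.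
Proof.
rewrite /quantum_cond /rank1_povm /ket.
under eq_bigr => x _ do under eq_bigr => x' _ do
  rewrite !complexr0 conj_real_complex -!rmorphM.
under eq_bigr do rewrite -rmorph_sum.
rewrite -rmorph_sum /= expr2 big_distrl; apply: eq_bigr => x _ /=.
by rewrite big_distrr; apply: eq_bigr => x' _ /=; ring.
Qed.

End Quantum.

Section QuantumBV.

Variables (R : rcfType) (n : nat).
Implicit Types (S : {set omega n.+1}) (x y : omega n.+1).

Definition excl_vec y x : R := (2 ^ n)%:R^-1 - (x == y)%:R.

Lemma excl_vec_orthonormal x x' :
  \sum_y excl_vec y x * excl_vec y x' = (x == x')%:R.
Proof.
set c : R := (2 ^ n)%:R^-1.
have c0 : (2 ^ n)%:R != 0 :> R by rewrite pnatr_eq0 expn_eq0.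
rewrite (eq_bigr (fun y => c * c - (x' == y)%:R * c - (x == y)%:R * c
                           + (x == y)%:R * (x' == y)%:R)); last first.
  by move=> y _; rewrite /excl_vec -/c; ring.
rewrite !big_split /= !sumrN !sum_delta_mull sumr_const card_omega eq_sym.
by rewrite -[_ *+ _]mulr_natr expnS (natrM R) /c; field.
Qed.

Lemma amp_excl_vec S y : #|S| = (2 ^ n)%N -> y \in S ->
  \sum_x amp R S x * excl_vec y x = 0.
Proof.
move=> cardS yS; set a := (Num.sqrt (#|S|%:R : R))^-1.
rewrite (eq_bigr (fun x =>
  a / (2 ^ n)%:R * (x \in S)%:R - (y == x)%:R * (a * (x \in S)%:R))).
  rewrite sumrB sum_delta_mull yS -mulr_sumr sum_indicator cardS.
  by rewrite divfK ?pnatr_eq0 ?expn_eq0 // mulr1 subrr.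
by move=> x _; rewrite /amp /excl_vec -/a eq_sym; case: (x \in S) => /=; ring.
Qed.

Lemma povm_excl : povm (rank1_povm excl_vec).
Proof. exact: povm_rank1 excl_vec_orthonormal. Qed.

Lemma Vscore_excl : Vscore (FBV n.+1) (quantum_cond (rank1_povm excl_vec)) = 1.
Proof.
have povmE := povm_excl.
have gain1 S : S \in FBV n.+1 ->
    \sum_y quantum_cond (rank1_povm excl_vec) S y * score R S y = 1.
  move=> FS; have cardS := card_FBV_mem FS.
  rewrite sum_mul_score sum_quantum_cond // sum_amp_sqr ?FBV_neq0 //.
  rewrite big1 ?mulr0 ?subr0 // => y yS.
  by rewrite quantum_cond_rank1 amp_excl_vec // expr0n.
rewrite /Vscore (eq_bigr _ gain1) sumr_const card_FBV mulVf // pnatr_eq0 muln_eq0.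
by rewrite orbF subn_eq0 -ltnNge -[X in (X < _)%N](expn0 2) ltn_exp2l.
Qed.

End QuantumBV.

Theorem mainTheorem1 (R : rcfType) (n : nat) (hn : (1 <= n)%N) :
  (* classical value: max over C is 1/(2^n-1) *)
  ((forall h : omega n -> omega n -> R, classical_rule h ->
      Vscore (FBV n) (classical_cond h) <= ((2 ^ n - 1)%N%:R)^-1) /\
   (exists h : omega n -> omega n -> R, classical_rule h /\
      Vscore (FBV n) (classical_cond h) = ((2 ^ n - 1)%N%:R)^-1)) /\
  (* quantum value: sup over Q is 1 *)
  ((forall E : omega n -> omega n -> omega n -> R[i], povm E ->
      Vscore (FBV n) (quantum_cond E) <= 1) /\
   (forall eps : R, 0 < eps -> exists E : omega n -> omega n -> omega n -> R[i],
      povm E /\ 1 - eps < Vscore (FBV n) (quantum_cond E))).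
Proof.
case: n hn => // n _; split; split.
- move=> h hr; rewrite Vscore_classical // -[X in _ <= X]mul1r.
  rewrite ler_wpM2r ?invr_ge0 ?ler0n // gerBl.
  by apply: sumr_ge0 => x _; case: hr.
- pose flip0 (x : omega n.+1) := xorv x (basisv ord0).
  have flip_rule := classical_rule_det R flip0.
  exists (det_rule R flip0); split => //.
  rewrite Vscore_classical // big1 ?subr0 ?mul1r // => x _.
  apply/eqP; rewrite pnatr_eq0 eqb0; apply/eqP => /ffunP/(_ ord0).
  by rewrite !ffunE eqxx; case: (x ord0).
- by move=> E; apply: Vscore_quantum_le1.
- move=> eps eps_gt0; exists (rank1_povm (excl_vec R (n:=n))).
  by split; [exact: povm_excl | rewrite Vscore_excl; lra].
Qed.
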